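(* Let $S$ be a semibounded relation in $\mathfrak H$ with lower bound $\gamma\in\mathbb R$ and let $c\le\gamma$. Then: (a) $S_{{\rm K},c}=\{\{\varphi,\varphi'\}\in S^*:\varphi'-c\varphi\in\mathrm{dom}\,\bar{\mathfrak t}((S-c)^{-1})\}$; and if $H$ is a selfadjoint extension of $S$ with $\mathrm{ran}\,(H-c)\subset\mathrm{dom}\,\bar{\mathfrak t}((S-c)^{-1})$, then $H=S_{{\rm K},c}$. (b) $S_{{\rm k},c}=S\,\widehat+\,\widehat{\mathfrak N}_c(S^* )$; and if $H$ is a symmetric extension of $S$ with $\mathrm{ran}\,(H-c)\subset\mathrm{ran}\,(S-c)$, then $H\subset S_{{\rm k},c}$. (c) For every $c<\gamma$, $S_{{\rm K},c}=\overline S\,\widehat+\,\widehat{\mathfrak N}_c(S^* )$; and $S_{{\rm k},\gamma}=S_{{\rm K},\gamma}$ holds if and only if $\mathrm{ran}\,(S-\gamma)=\overline{\mathrm{ran}}\,(S-\gamma)\cap\mathrm{ran}\,(S^*-\gamma)$; in particular it holds if $\mathrm{ran}\,(S-\gamma)$ is closed.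
   Context: Linear relations in $\mathfrak H$ are linear subspaces of $\mathfrak H\times\mathfrak H$; $T^*$ adjoint relation, $T^{**}=\overline T$ the closure, $T^{-1}=\{\{g,f\}:\{f,g\}\in T\}$, $RT=\{\{f,h\}:\exists g,\{f,g\}\in T,\{g,h\}\in R\}$, $T-c=\{\{f,g-cf\}:\{f,g\}\in T\}$, $c+T=\{\{f,g+cf\}\}$, $A\,\widehat+\,B=\{\{f+h,g+k\}:\{f,g\}\in A,\{h,k\}\in B\}$, $\widehat{\mathfrak N}_c(S^* )=\{\{f,cf\}:f\in\ker(S^*-c)\}$. Symmetric: $T\subset T^*$; selfadjoint: $T=T^*$. $S$ is semibounded with lower bound $\gamma$ if $\gamma$ is the supremum of all $c$ with $(\varphi',\varphi)\ge c\|\varphi\|^2$ on $S$. For a semibounded relation $T$, $\mathfrak t(T)[\varphi,\psi]=(\varphi',\psi)$ on $\mathrm{dom}\,T$; it is closable with closure $\bar{\mathfrak t}(T)$; here $\mathrm{dom}\,\mathfrak t((S-c)^{-1})=\mathrm{ran}\,(S-c)$. A representing map for $\mathfrak t(S)-c$ is a linear operator $Q_c$ into a Hilbert space with $\mathrm{dom}\,Q_c=\mathrm{dom}\,S$ and $\mathfrak t(S)[\varphi,\psi]=c(\varphi,\psi)+(Q_c\varphi,Q_c\psi)$; its companion relation is $J_c=\{\{Q_c\varphi,\varphi'-c\varphi\}:\{\varphi,\varphi'\}\in S\}$. The Kreĭn type extension is $S_{{\rm K},c}=c+J_c^{**}J_c^*$ and the weak Kreĭn type extension is $S_{{\rm k},c}=c+J_cJ_c^*$;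 both are independent of the choice of $Q_c$ and $S\subset S_{{\rm k},c}\subset S_{{\rm K},c}$. *)

From mathcomp Require Import all_boot all_order all_algebra.
From mathcomp Require Import complex reals.
From mathcomp Require Import classical_sets.
Import Order.TTheory GRing.Theory Num.Theory.

Set Implicit Arguments.
Unset Strict Implicit.
Unset Printing Implicit Defensive.

Local Open Scope ring_scope.
Local Open Scope classical_set_scope.

Section LinearRelations.
Variable R : realType.
Local Notation C := R[i].

Section Space.
Variables (V : lmodType C) (ip : V -> V -> C).

Definition cvg_seq (u : nat -> V) (x : V) : Prop :=
  forall e : R, 0 < e -> exists N : nat, forall n : nat, (N <= n)%N ->
    ip (u n - x) (u n - x) < (e%:C)%C.

Definition cauchy_seq (u : nat -> V) : Prop :=
  forall e : R, 0 < e -> exists N : nat, forall n m : nat,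
    (N <= n)%N -> (N <= m)%N -> ip (u n - u m) (u n - u m) < (e%:C)%C.

Definition is_hilbert : Prop :=
  [/\ (forall (a : C) (x y z : V), ip (a *: x + y) z = a * ip x z + ip y z),
      (forall x y : V, ip y x = conjc (ip x y)),
      (forall x : V, 0 <= ip x x),
      (forall x : V, ip x x = 0 -> x = 0)
    & (forall u : nat -> V, cauchy_seq u -> exists x, cvg_seq u x)].

Definition closure_set (A : set V) : set V :=
  [set x | exists u : nat -> V, (forall n, A (u n)) /\ cvg_seq u x].
End Space.

Section Rel.
Variables (A B : lmodType C).

Definition is_linrel (T : set (A * B)) : Prop :=
  T (0, 0) /\
  (forall (a : C) (p q : A * B), T p -> T q ->
     T (a *: p.1 + q.1, a *: p.2 + q.2)).

Definition domr (T : set (A * B)) : set A := [set f | exists g, T (f, g)].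
Definition ranr (T : set (A * B)) : set B := [set g | exists f, T (f, g)].

Definition invr (T : set (A * B)) : set (B * A) := [set p | T (p.2, p.1)].

Definition adjr (ipA : A -> A -> C) (ipB : B -> B -> C) (T : set (A * B))
  : set (B * A) :=
  [set p | forall q, T q -> ipB q.2 p.1 = ipA q.1 p.2].
End Rel.

Definition compr (A B D : lmodType C) (Rl : set (B * D)) (T : set (A * B))
  : set (A * D) :=
  [set p | exists g, T (p.1, g) /\ Rl (g, p.2)].

Section Endo.
Variables (V : lmodType C) (ip : V -> V -> C).

Definition shiftr (T : set (V * V)) (c : C) : set (V * V) :=
  [set p | exists q, T q /\ p = (q.1, q.2 - c *: q.1)].
Definition plusr (c : C) (T : set (V * V)) : set (V * V) :=
  [set p | exists q, T q /\ p = (q.1, q.2 + c *: q.1)].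

Definition csum (T1 T2 : set (V * V)) : set (V * V) :=
  [set p | exists q1 q2, T1 q1 /\ T2 q2 /\ p = (q1.1 + q2.1, q1.2 + q2.2)].

Definition hatN (c : C) (T : set (V * V)) : set (V * V) :=
  [set p | shiftr T c (p.1, 0) /\ p.2 = c *: p.1].

Definition closure_rel (T : set (V * V)) : set (V * V) :=
  [set p | exists u : nat -> V * V, (forall n, T (u n)) /\
     cvg_seq ip (fun n => (u n).1) p.1 /\ cvg_seq ip (fun n => (u n).2) p.2].

Definition lb_set (T : set (V * V)) : set R :=
  [set c | forall p, T p -> (c%:C)%C * ip p.1 p.1 <= ip p.2 p.1].

Definition semibounded_lb (T : set (V * V)) (gamma : R) : Prop :=
  is_linrel T /\
  (forall c, lb_set T c -> c <= gamma) /\ (forall b, (forall c, lb_set T c -> c <= b) -> gamma <= b).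

(* domain of the closure of the (closable) form t(T)[phi,psi] = (phi',psi)
   of a semibounded relation T: phi such that there are {phi_n, phi_n'} in T
   with phi_n -> phi and t[phi_n - phi_m] -> 0 *)
Definition dom_formcl (T : set (V * V)) : set V :=
  [set x | exists u : nat -> V * V, (forall n, T (u n)) /\
     cvg_seq ip (fun n => (u n).1) x /\
     forall e : R, 0 < e -> exists N : nat, forall n m : nat,
       (N <= n)%N -> (N <= m)%N ->
       `| ip ((u n).2 - (u m).2) ((u n).1 - (u m).1) | < (e%:C)%C].

Definition symmetricr (T : set (V * V)) : Prop := T `<=` adjr ip ip T.
Definition selfadjointr (T : set (V * V)) : Prop := T = adjr ip ip T.
End Endo.

Section Krein.
Variables (V : lmodType C) (ip : V -> V -> C).
Variables (K : lmodType C) (ipK : K -> K -> C).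

Definition repr_map (S : set (V * V)) (c : R) (Q : V -> K) : Prop :=
  (forall (a : C) (x y : V), domr S x -> domr S y ->
     Q (a *: x + y) = a *: Q x + Q y) /\
  (forall p y, S p -> domr S y ->
     ip p.2 y = (c%:C)%C * ip p.1 y + ipK (Q p.1) (Q y)).

Definition companion (S : set (V * V)) (c : R) (Q : V -> K) : set (K * V) :=
  [set p | exists q, S q /\ p = (Q q.1, q.2 - (c%:C)%C *: q.1)].

(* S_{K,c} = c + J_c^** J_c^*  and  S_{k,c} = c + J_c J_c^* *)
Definition kreinK (S : set (V * V)) (c : R) (Q : V -> K) : set (V * V) :=
  let J := companion S c Q in
  plusr (c%:C)%C (compr (adjr ip ipK (adjr ipK ip J)) (adjr ipK ip J)).

Definition kreink (S : set (V * V)) (c : R) (Q : V -> K) : set (V * V) :=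
  let J := companion S c Q in
  plusr (c%:C)%C (compr J (adjr ipK ip J)).
End Krein.
End LinearRelations.

(* Write J for the companion relation of Q.  For {phi, phi'} in S one has
   {phi, Q phi} in J^*, and {h, 0} lies in J^* exactly when h is in
   ker (S^* - c).  The form t((S - c)^-1) evaluated on increments of
   (S - c) phi_n is ||Q (phi_n - phi_m)||^2, so dom t((S - c)^-1)-bar consists
   of the limits of (S - c) phi_n along which Q phi_n is Cauchy; this
   identifies c + J^** J^* and c + J J^*.  Orthogonal projection in the graph
   spaces shows that J^** is contained in the closure of J and that
   I + J^** J^* is onto, so J^** J^* is selfadjoint; this yields the
   uniqueness statements and the range criterion of (c).  For c < gamma the
   bound ||Q phi||^2 >= (c' - c) ||phi||^2 with c < c' <= gamma turns Cauchy
   sequences Q phi_n into convergent phi_n, i.e. into elements of the closure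
   of S. *)

From mathcomp Require Import all_boot all_order all_algebra.
From mathcomp Require Import complex reals classical_sets boolp.
From mathcomp Require Import ring lra.
Import Order.TTheory GRing.Theory Num.Theory.
Local Open Scope ring_scope.
Local Open Scope classical_set_scope.
Local Open Scope complex_scope.

Set Implicit Arguments.
Unset Strict Implicit.
Unset Printing Implicit Defensive.

Section SquaredModulus.
Variable R : realType.
Local Notation C := R[i].
Local Notation Re := complex.Re.
Local Notation Im := complex.Im.

Definition sqmod (z : C) : R := Re z ^+ 2 + Im z ^+ 2.

Lemma sqmod_ge0 z : 0 <= sqmod z.
Proof. rewrite /sqmod; nra. Qed.

Lemma sqmod_eq0 z : sqmod z = 0 -> z = 0.
Proof.
case: z => a b; rewrite /sqmod /= => h.
have -> : a = 0 by nra.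
by have -> : b = 0 by nra.
Qed.

Lemma mulJc (z : C) : (z^* * z)%C = (sqmod z)%:C.
Proof.
case: z => a b; rewrite /sqmod /=.
by apply/eqP; rewrite eq_complex /=; apply/andP; split; apply/eqP; ring.
Qed.

Lemma sqmodD_le x y : sqmod (x + y) <= 2 * (sqmod x + sqmod y).
Proof.
case: x => a b; case: y => c d; rewrite /sqmod /=.
have := sqr_ge0 (a - c); have := sqr_ge0 (b - d); nra.
Qed.

Lemma sqmodN x : sqmod (- x) = sqmod x.
Proof. by case: x => a b; rewrite /sqmod /=; ring. Qed.

Lemma sqmodBC x y : sqmod (x - y) = sqmod (y - x).
Proof. by rewrite -sqmodN opprB. Qed.

Lemma sqmodJ x : sqmod (x^*)%C = sqmod x.
Proof. by case: x => a b; rewrite /sqmod /=; ring. Qed.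

Lemma sqmod_realM (k : R) w : sqmod (k%:C * w) = k ^+ 2 * sqmod w.
Proof. by case: w => a b; rewrite /sqmod /=; ring. Qed.

Lemma Re_sqr_le x : Re x ^+ 2 <= sqmod x.
Proof. rewrite /sqmod; nra. Qed.

Lemma ReD (x y : C) : Re (x + y) = Re x + Re y.
Proof. by case: x; case: y. Qed.

Lemma ReN (x : C) : Re (- x) = - Re x.
Proof. by case: x. Qed.

Lemma ReB (x y : C) : Re (x - y) = Re x - Re y.
Proof. by rewrite ReD ReN. Qed.

Lemma ReJ (x : C) : Re (x^*)%C = Re x.
Proof. by case: x. Qed.

Lemma Re_realM (k : R) x : Re (k%:C * x) = k * Re x.
Proof. by case: x => a b /=; ring. Qed.

Lemma Re_JrealM (k : R) w : Re ((k%:C * w)^* * w)%C = k * sqmod w.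
Proof. by case: w => a b; rewrite /sqmod /=; ring. Qed.

Lemma ge0_RRe (z : C) : 0 <= z -> z = (Re z)%:C.
Proof. by move=> /ger0_real /RRe_real. Qed.

Definition cvgc (z : nat -> C) (l : C) :=
  forall e : R, 0 < e -> exists N, forall n, (N <= n)%N -> sqmod (z n - l) < e.

Lemma cvgc_uniq z l l' : cvgc z l -> cvgc z l' -> l = l'.
Proof.
move=> h1 h2; apply/eqP; rewrite -subr_eq0; apply/eqP; apply: sqmod_eq0.
apply/eqP; rewrite eq_le sqmod_ge0 andbT leNgt; apply/negP => hp.
have e4 : 0 < sqmod (l - l') / 4 by rewrite divr_gt0.
have [N1 hN1] := h1 _ e4; have [N2 hN2] := h2 _ e4.
have a1 := hN1 (maxn N1 N2) (leq_maxl _ _).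
have a2 := hN2 (maxn N1 N2) (leq_maxr _ _).
have := sqmodD_le (l - z (maxn N1 N2)) (z (maxn N1 N2) - l').
rewrite (sqmodBC l) addrA subrK; lra.
Qed.

Lemma cvgc_cst l : cvgc (fun _ => l) l.
Proof. by move=> e he; exists 0%N => n _; rewrite subrr /sqmod /= expr0n /=; lra. Qed.

Lemma eq_cvgc_lim z w l l' : (forall n, z n = w n) -> cvgc z l -> cvgc w l' -> l = l'.
Proof.
move=> e h1 h2; apply: cvgc_uniq h2.
by move=> x /h1 [N hN]; exists N => n /hN; rewrite e.
Qed.

Lemma eventually_invS_lt (e : R) : 0 < e -> exists N, forall n, (N <= n)%N -> n.+1%:R^-1 < e.
Proof.
move=> he; exists (Num.Def.archi_bound e^-1) => n hn.
have hie : 0 < e^-1 by rewrite invr_gt0.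
have h1 := archi_boundP (ltW hie).
have h2 : (Num.Def.archi_bound e^-1)%:R <= n%:R :> R by rewrite ler_nat.
have h4 : e^-1 < n.+1%:R.
  by apply: lt_le_trans h1 (le_trans h2 _); rewrite ler_nat.
by rewrite -(invrK e) ltf_pV2 ?posrE ?ltr0Sn.
Qed.

Lemma cvgc_Re_ge z l (d : R) : cvgc z l -> (forall n, d <= Re (z n)) -> d <= Re l.
Proof.
move=> h hd; rewrite leNgt; apply/negP => hl.
have dp : 0 < (d - Re l) ^+ 2 by rewrite exprn_gt0 // subr_gt0.
have [N hN] := h _ dp.
have := hN N (leqnn _); have := Re_sqr_le (z N - l); rewrite ReB.
have := hd N; nra.
Qed.

Lemma cvgc_Re_le z l (d : R) : cvgc z l ->
  (forall n, Re (z n) <= d + n.+1%:R^-1) -> Re l <= d.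
Proof.
move=> h hd; rewrite leNgt; apply/negP => hl.
have dp : 0 < (Re l - d) ^+ 2 / 4 by rewrite divr_gt0 // exprn_gt0 // subr_gt0.
have [N1 hN1] := h _ dp.
have dp2 : 0 < (Re l - d) / 2 by rewrite divr_gt0 // subr_gt0.
have [N2 hN2] := eventually_invS_lt dp2.
set n := maxn N1 N2.
have a := hN1 n (leq_maxl _ _); have a2 := hN2 n (leq_maxr _ _).
have b := Re_sqr_le (z n - l); rewrite ReB in b.
have c2 : Re (z n) < d + (Re l - d) / 2 by apply: le_lt_trans (hd n) _; rewrite ltrD2l.
have : 0 < (Re l - Re (z n) - (Re l - d) / 2) * (Re l - Re (z n) + (Re l - d) / 2).
  by apply: mulr_gt0; lra.
have : (Re l - d) ^+ 2 / 4 = ((Re l - d) / 2) ^+ 2 by field.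
nra.
Qed.
End SquaredModulus.

Section InnerProduct.
Variable R : realType.
Local Notation C := R[i].
Local Notation Re := complex.Re.
Variables (W : lmodType C) (ip : W -> W -> C).
Hypothesis HW : is_hilbert ip.

Lemma ip_linearl a x y z : ip (a *: x + y) z = a * ip x z + ip y z.
Proof. by case: HW. Qed.

Lemma ipC x y : ip y x = (ip x y)^*%C.
Proof. by case: HW. Qed.

Lemma ip_self_ge0 x : 0 <= ip x x.
Proof. by case: HW. Qed.

Lemma ip_self_eq0 x : ip x x = 0 -> x = 0.
Proof. by case: HW => _ _ _ + _; apply. Qed.

Lemma ip0l x : ip 0 x = 0.
Proof.
have := ip_linearl 1 0 0 x; rewrite scaler0 addr0 mul1r => h.
by apply: (addrI (ip 0 x)); rewrite addr0 -h.
Qed.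

Lemma ip0r x : ip x 0 = 0.
Proof. by rewrite ipC ip0l conjc0. Qed.

Lemma ipDl x y z : ip (x + y) z = ip x z + ip y z.
Proof. by rewrite -[x]scale1r ip_linearl mul1r scale1r. Qed.

Lemma ipZl a x z : ip (a *: x) z = a * ip x z.
Proof. by rewrite -[a *: x]addr0 ip_linearl ip0l addr0. Qed.

Lemma ipNl x z : ip (- x) z = - ip x z.
Proof. by rewrite -scaleN1r ipZl mulN1r. Qed.

Lemma ipBl x y z : ip (x - y) z = ip x z - ip y z.
Proof. by rewrite ipDl ipNl. Qed.

Lemma ipDr x y z : ip z (x + y) = ip z x + ip z y.
Proof. by rewrite !(ipC _ z) ipDl rmorphD. Qed.

Lemma ipZr a x z : ip z (a *: x) = a^*%C * ip z x.
Proof. by rewrite !(ipC _ z) ipZl rmorphM. Qed.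

Lemma ipNr x z : ip z (- x) = - ip z x.
Proof. by rewrite !(ipC _ z) ipNl rmorphN. Qed.

Lemma ipBr x y z : ip z (x - y) = ip z x - ip z y.
Proof. by rewrite ipDr ipNr. Qed.

Lemma ipZr_real (k : R) x z : ip z (k%:C *: x) = k%:C * ip z x.
Proof. by rewrite ipZr conjc_real. Qed.

Definition sqnorm x := Re (ip x x).

Lemma ip_self x : ip x x = (sqnorm x)%:C.
Proof. exact: ge0_RRe (ip_self_ge0 x). Qed.

Lemma sqnorm_ge0 x : 0 <= sqnorm x.
Proof. by have := ip_self_ge0 x; rewrite ip_self lecR. Qed.

Lemma sqnorm_eq0 x : sqnorm x = 0 -> x = 0.
Proof. by move=> h; apply: ip_self_eq0; rewrite ip_self h. Qed.

Lemma sqnormD x y : sqnorm (x + y) = sqnorm x + sqnorm y + 2 * Re (ip x y).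
Proof. by rewrite /sqnorm ipDl !ipDr (ipC x y) !ReD ReJ; ring. Qed.

Lemma sqnormZ a x : sqnorm (a *: x) = sqmod a * sqnorm x.
Proof. by rewrite /sqnorm ipZl ipZr mulrA [a * _]mulrC mulJc ip_self Re_realM. Qed.

Lemma sqnormN x : sqnorm (- x) = sqnorm x.
Proof. by rewrite /sqnorm ipNl ipNr opprK. Qed.

Lemma sqnormB x y : sqnorm (x - y) = sqnorm x + sqnorm y - 2 * Re (ip x y).
Proof. by rewrite sqnormD sqnormN ipNr ReN; ring. Qed.

Lemma sqnormBC x y : sqnorm (x - y) = sqnorm (y - x).
Proof. by rewrite -sqnormN opprB. Qed.

Lemma sqnormD_le x y : sqnorm (x + y) <= 2 * (sqnorm x + sqnorm y).
Proof. have := sqnormB x y; have := sqnormD x y; have := sqnorm_ge0 (x - y); lra. Qed.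

Lemma parallelogram x y :
  sqnorm (x + y) + sqnorm (x - y) = 2 * sqnorm x + 2 * sqnorm y.
Proof. rewrite sqnormD sqnormB; ring. Qed.

(* The discriminant of the nonnegative quadratic t |-> ||x + t y||^2. *)
Lemma Re_ip_sqr_le x y : Re (ip x y) ^+ 2 <= sqnorm x * sqnorm y.
Proof.
set r := Re (ip x y).
have key t : 0 <= sqnorm x + 2 * t * r + t ^+ 2 * sqnorm y.
  have := sqnorm_ge0 (x + t%:C *: y).
  by rewrite sqnormD sqnormZ ipZr_real Re_realM /sqmod /= expr0n /= addr0 -/r; lra.
have hx := sqnorm_ge0 x; have hy := sqnorm_ge0 y.
have [hy0|hyp] := eqVneq (sqnorm y) 0.
  rewrite hy0 mulr0.
  have [->|rn0] := eqVneq r 0; first by rewrite expr0n.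
  have := key (- (sqnorm x + 1) / (2 * r)).
  have -> : 2 * (- (sqnorm x + 1) / (2 * r)) * r = - (sqnorm x + 1) by field.
  by rewrite hy0 mulr0 addr0; lra.
have yp : 0 < sqnorm y by rewrite lt_neqAle eq_sym hyp hy.
have := mulr_ge0 (ltW yp) (key (- r / sqnorm y)).
have -> : sqnorm y * (sqnorm x + 2 * (- r / sqnorm y) * r + (- r / sqnorm y) ^+ 2 * sqnorm y)
    = sqnorm x * sqnorm y - r ^+ 2 by field.
lra.
Qed.

Lemma CauchySchwarz x y : sqmod (ip x y) <= sqnorm x * sqnorm y.
Proof.
set w := ip x y.
have h := Re_ip_sqr_le x (w *: y).
rewrite ipZr -/w mulJc sqnormZ /= in h.
have s0 := sqmod_ge0 w; have hx := sqnorm_ge0 x; have hy := sqnorm_ge0 y.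
have [->|sp] := eqVneq (sqmod w) 0; first exact: mulr_ge0.
have spp : 0 < sqmod w by rewrite lt_neqAle eq_sym sp s0.
nra.
Qed.

Definition ncvg (u : nat -> W) x :=
  forall e : R, 0 < e -> exists N, forall n, (N <= n)%N -> sqnorm (u n - x) < e.

Definition ncauchy (u : nat -> W) :=
  forall e : R, 0 < e -> exists N, forall n m, (N <= n)%N -> (N <= m)%N ->
    sqnorm (u n - u m) < e.

Lemma cvg_seqE u x : cvg_seq ip u x <-> ncvg u x.
Proof. by split=> h e /h [N hN]; exists N => n /hN; rewrite ip_self ltcR. Qed.

Lemma ncauchy_cvg u : ncauchy u -> exists x, ncvg u x.
Proof.
move=> h; have [_ _ _ _ hc] := HW.
have [x hx] : exists x, cvg_seq ip u x.
  apply: hc => e /h [N hN]; exists N => n m h1 h2.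
  by rewrite ip_self ltcR; apply: hN.
by exists x; apply/cvg_seqE.
Qed.

Lemma ncvg_cauchy u x : ncvg u x -> ncauchy u.
Proof.
move=> h e he.
have [N hN] := h _ (divr_gt0 he (ltr0n _ 4)); exists N => n m h1 h2.
have := sqnormD_le (u n - x) (x - u m).
rewrite addrA subrK (sqnormBC x); have := hN n h1; have := hN m h2; lra.
Qed.

Lemma eq_ncvg u v x : (forall n, u n = v n) -> ncvg u x -> ncvg v x.
Proof. by move=> e h ee /h [N hN]; exists N => n /hN; rewrite e. Qed.

Lemma ncvg_cst x : ncvg (fun _ => x) x.
Proof. by move=> e he; exists 0%N => n _; rewrite subrr /sqnorm ip0l. Qed.

Lemma ncvgD u v x y : ncvg u x -> ncvg v y -> ncvg (fun n => u n + v n) (x + y).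
Proof.
move=> h1 h2 e he.
have e4 : 0 < e / 4 by rewrite divr_gt0.
have [N1 hN1] := h1 _ e4; have [N2 hN2] := h2 _ e4.
exists (maxn N1 N2) => n hn.
have := hN1 n (leq_trans (leq_maxl _ _) hn).
have := hN2 n (leq_trans (leq_maxr _ _) hn).
have := sqnormD_le (u n - x) (v n - y).
by rewrite addrACA -opprD; lra.
Qed.

Lemma ncvgZ a u x : ncvg u x -> ncvg (fun n => a *: u n) (a *: x).
Proof.
move=> h e he.
have s0 := sqmod_ge0 a.
have hs : 0 < sqmod a + 1 by rewrite ltr_wpDl.
have [N hN] := h _ (divr_gt0 he hs); exists N => n /hN hn.
rewrite -scalerBr sqnormZ.
have : sqmod a * sqnorm (u n - x) <= sqmod a * (e / (sqmod a + 1)).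
  by rewrite ler_wpM2l // ltW.
have : sqmod a * (e / (sqmod a + 1)) < e.
  by rewrite mulrA ltr_pdivrMr // mulrDr mulr1; lra.
lra.
Qed.

Lemma ncvgB u v x y : ncvg u x -> ncvg v y -> ncvg (fun n => u n - v n) (x - y).
Proof.
move=> h1 /(ncvgZ (-1)) h2; apply: ncvgD h1 _.
by rewrite -scaleN1r; apply: eq_ncvg h2 => n; rewrite scaleN1r.
Qed.

Lemma cvgc_ipl u x y : ncvg u x -> cvgc (fun n => ip (u n) y) (ip x y).
Proof.
move=> h e he.
have hy := sqnorm_ge0 y.
have hs : 0 < sqnorm y + 1 by rewrite ltr_wpDl.
have [N hN] := h _ (divr_gt0 he hs); exists N => n /hN hn.
rewrite -ipBl.
have := CauchySchwarz (u n - x) y.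
have : sqnorm (u n - x) * sqnorm y <= e / (sqnorm y + 1) * sqnorm y.
  by rewrite ler_wpM2r // ltW.
have : e / (sqnorm y + 1) * sqnorm y < e.
  by rewrite mulrAC ltr_pdivrMr // mulrDr mulr1; lra.
lra.
Qed.

Lemma cvgc_ipr u x y : ncvg u x -> cvgc (fun n => ip y (u n)) (ip y x).
Proof.
move=> /cvgc_ipl h e /(h y) [N hN]; exists N => n /hN.
by rewrite (ipC (u n)) (ipC x) -rmorphB sqmodJ.
Qed.

Lemma cvgc_sqnorm u x : ncvg u x -> cvgc (fun n => ip (u n) (u n)) (ip x x).
Proof.
move=> h e he.
have hx := sqnorm_ge0 x.
set e1 := Num.min 1 (e / (10 * (sqnorm x + 1))).
have he1 : 0 < e1 by rewrite lt_min ltr01 /= divr_gt0 // mulr_gt0 // ltr_wpDl.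
have [N hN] := h _ he1; exists N => n /hN hn.
set d := u n - x.
have -> : ip (u n) (u n) - ip x x = ip d d + ip d x + ip x d.
  by rewrite -[u n](subrK x) -/d !ipDl !ipDr; ring.
have := sqmodD_le (ip d d + ip d x) (ip x d).
have := sqmodD_le (ip d d) (ip d x).
have := CauchySchwarz d d; have := CauchySchwarz d x; have := CauchySchwarz x d.
have hd := sqnorm_ge0 d.
have hd1 : sqnorm d < 1 by apply: lt_le_trans hn _; rewrite ge_min lexx.
have hd2 : sqnorm d < e / (10 * (sqnorm x + 1)).
  by apply: lt_le_trans hn _; rewrite ge_min lexx orbT.
have : sqnorm d * (10 * (sqnorm x + 1)) < e.
  by rewrite -ltr_pdivlMr // mulr_gt0 // ltr_wpDl.
nra.
Qed.
End InnerProduct.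

Section Projection.
Variable R : realType.
Local Notation C := R[i].
Variables (W : lmodType C) (ip : W -> W -> C).
Hypothesis HW : is_hilbert ip.
Local Notation sqnorm := (sqnorm ip).
Local Notation ncvg := (ncvg ip).

(* Expanding ||r - t a||^2 at t := k (ip r a) with k small forces ip r a = 0. *)
Lemma orthogonal_of_min (r a : W) (d : R) :
  sqnorm r <= d -> (forall t : C, d <= sqnorm (r - t *: a)) -> ip r a = 0.
Proof.
move=> hr hmin; set w := ip r a; set k := (sqnorm a + 1)^-1.
have ha := sqnorm_ge0 HW a.
have kp : 0 < k by rewrite invr_gt0 ltr_wpDl.
have ka : k * sqnorm a < 1.
  by rewrite /k mulrC ltr_pdivrMr ?ltr_wpDl // mul1r ltrDl.
have := hmin (k%:C * w).
rewrite (sqnormB HW) (sqnormZ HW) (ipZr HW) -/w Re_JrealM sqmod_realM => hh.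
have s0 := sqmod_ge0 w.
apply: sqmod_eq0; apply/eqP; rewrite eq_le s0 andbT leNgt; apply/negP => sp.
have h1 : 0 <= (k * sqmod w) * (k * sqnorm a - 2).
  have -> : (k * sqmod w) * (k * sqnorm a - 2) =
      k ^+ 2 * sqmod w * sqnorm a - 2 * (k * sqmod w) by ring.
  move: hr hh; set X := sqnorm r; set Y := sqnorm a; clearbody X Y; lra.
have : 0 < k * sqmod w by apply: mulr_gt0.
move: h1 ka; set P := k * sqmod w; set Q := k * sqnorm a; clearbody P Q; nra.
Qed.

Lemma minimizing_seq_cauchy (M : set W) z (d : R) (s : nat -> W) :
  (forall x y, M x -> M y -> M (2^-1 *: (x + y))) ->
  (forall a, M a -> d <= sqnorm (z - a)) ->
  (forall n, M (s n)) -> (forall n, sqnorm (z - s n) < d + n.+1%:R^-1) ->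
  ncauchy ip s.
Proof.
move=> Mmid dlb sM sl e he.
have [N hN] := eventually_invS_lt (divr_gt0 he (ltr0n _ 4)).
exists N => n m hn hm.
have := parallelogram HW (z - s n) (z - s m).
have -> : z - s n - (z - s m) = s m - s n by rewrite opprB addrC addrA subrK.
have -> : z - s n + (z - s m) = 2 *: (z - 2^-1 *: (s n + s m)).
  rewrite scalerBr scalerA mulfV ?pnatr_eq0 // scale1r scaler_nat mulr2n.
  by rewrite opprD !addrA; congr (_ - _); rewrite addrAC.
rewrite (sqnormZ HW) (sqnormBC HW (s n)).
have -> : sqmod (2 : C) = 4 by rewrite /sqmod /=; ring.
have := dlb _ (Mmid _ _ (sM n) (sM m)).
have := sl n; have := sl m; have := hN n hn; have := hN m hm.
set i1 := n.+1%:R^-1; set i2 := m.+1%:R^-1.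
set A := sqnorm (z - s n); set B := sqnorm (z - s m); set X := sqnorm (s m - s n).
set Mi := sqnorm (z - _ *: (s n + s m)).
clearbody i1 i2 A B X Mi; lra.
Qed.

Lemma orthogonal_projection (M : set W) : M 0 ->
  (forall a x y, M x -> M y -> M (a *: x + y)) ->
  forall z, exists (s : nat -> W) m, (forall n, M (s n)) /\ ncvg s m /\
    forall a, M a -> ip (z - m) a = 0.
Proof.
move=> M0 Ml z.
have MZ a x : M x -> M (a *: x) by move=> hx; rewrite -[_ *: x]addr0; apply: Ml.
have MD x y : M x -> M y -> M (x + y) by move=> hx hy; rewrite -[x]scale1r; apply: Ml.
set E := [set sqnorm (z - a) | a in M].
have hinf : has_inf E.
  split; first by exists (sqnorm (z - 0)), 0.
  by exists 0 => _ [a _ <-]; apply: sqnorm_ge0.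
set d := inf E.
have dlb a : M a -> d <= sqnorm (z - a) by move=> ha; apply: (ge_inf hinf.2); exists a.
have hs n : {a | M a /\ sqnorm (z - a) < d + n.+1%:R^-1}.
  apply: cid.
  have hn : 0 < n.+1%:R^-1 :> R by rewrite invr_gt0 ltr0Sn.
  have [_ [a ha <-] hlt] := inf_adherent hn hinf.
  by exists a.
set s := fun n => proj1_sig (hs n).
have sM n : M (s n) by case: (proj2_sig (hs n)).
have sl n : sqnorm (z - s n) < d + n.+1%:R^-1 by case: (proj2_sig (hs n)).
have Mmid x y : M x -> M y -> M (2^-1 *: (x + y)) by move=> hx hy; apply: MZ; apply: MD.
have [m hm] := ncauchy_cvg HW (minimizing_seq_cauchy Mmid dlb sM sl).
exists s, m; split => //; split => // a ha.
have zs : ncvg (fun n => z - s n) (z - m) := ncvgB HW (ncvg_cst HW z) hm.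
apply: (orthogonal_of_min (d := d)).
  apply: (cvgc_Re_le (cvgc_sqnorm HW zs)) => n.
  exact/ltW/sl.
move=> t; apply: (cvgc_Re_ge (cvgc_sqnorm HW (ncvgB HW zs (ncvg_cst HW (t *: a))))) => n.
by rewrite -addrA -opprD; apply: dlb; apply: MD => //; apply: MZ.
Qed.
End Projection.

Section ProductSpace.
Variable R : realType.
Local Notation C := R[i].
Variables (A B : lmodType C) (ipA : A -> A -> C) (ipB : B -> B -> C).
Hypotheses (HA : is_hilbert ipA) (HB : is_hilbert ipB).

Definition ip_prod (p q : A * B) : C := ipA p.1 q.1 + ipB p.2 q.2.

Lemma sqnorm_prod p : sqnorm ip_prod p = sqnorm ipA p.1 + sqnorm ipB p.2.
Proof. by rewrite /sqnorm /ip_prod ReD. Qed.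

Lemma ip_prod_self p : ip_prod p p = (sqnorm ipA p.1 + sqnorm ipB p.2)%:C.
Proof. by rewrite /ip_prod (ip_self HA) (ip_self HB) -rmorphD. Qed.

Lemma ncvg_prod u x : ncvg ip_prod u x <->
  ncvg ipA (fun n => (u n).1) x.1 /\ ncvg ipB (fun n => (u n).2) x.2.
Proof.
split.
- move=> h; split=> e /h [N hN]; exists N => n /hN; rewrite sqnorm_prod /=.
    by have := sqnorm_ge0 HB ((u n).2 - x.2); lra.
  by have := sqnorm_ge0 HA ((u n).1 - x.1); lra.
- case=> h1 h2 e he.
  have [N1 hN1] := h1 _ (divr_gt0 he (ltr0n _ 2)).
  have [N2 hN2] := h2 _ (divr_gt0 he (ltr0n _ 2)).
  exists (maxn N1 N2) => n hn; rewrite sqnorm_prod /=.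
  have := hN1 n (leq_trans (leq_maxl _ _) hn).
  have := hN2 n (leq_trans (leq_maxr _ _) hn); lra.
Qed.

Lemma is_hilbert_prod : is_hilbert ip_prod.
Proof.
split.
- by move=> a x y z; rewrite /ip_prod /= (ip_linearl HA) (ip_linearl HB); ring.
- by move=> x y; rewrite /ip_prod (ipC HA x.1) (ipC HB x.2) rmorphD.
- by move=> x; rewrite ip_prod_self lecR addr_ge0 // sqnorm_ge0.
- move=> [x1 x2]; rewrite ip_prod_self /= => -[h].
  have := sqnorm_ge0 HA x1; have := sqnorm_ge0 HB x2 => g2 g1.
  have e1 : sqnorm ipA x1 = 0 by lra.
  have e2 : sqnorm ipB x2 = 0 by lra.
  by rewrite (sqnorm_eq0 HA e1) (sqnorm_eq0 HB e2).
- move=> u hu.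
  have hu' e : 0 < e -> exists N, forall n m, (N <= n)%N -> (N <= m)%N ->
      sqnorm ipA (u n - u m).1 + sqnorm ipB (u n - u m).2 < e.
    by move=> /hu [N hN]; exists N => n m h1 h2; rewrite -ltcR -ip_prod_self; apply: hN.
  have c1 : ncauchy ipA (fun n => (u n).1).
    move=> e /hu' [N hN]; exists N => n m h1 h2; have := hN n m h1 h2.
    by have := sqnorm_ge0 HB (u n - u m).2; rewrite /=; lra.
  have c2 : ncauchy ipB (fun n => (u n).2).
    move=> e /hu' [N hN]; exists N => n m h1 h2; have := hN n m h1 h2.
    by have := sqnorm_ge0 HA (u n - u m).1; rewrite /=; lra.
  have [x1 h1] := ncauchy_cvg HA c1; have [x2 h2] := ncauchy_cvg HB c2.
  exists (x1, x2) => e he.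
  have [N hN] := proj2 (ncvg_prod u (x1, x2)) (conj h1 h2) e he.
  by exists N => n /hN; rewrite sqnorm_prod ip_prod_self ltcR.
Qed.
End ProductSpace.

Section LinearRelation.
Variable R : realType.
Local Notation C := R[i].
Variables (A B : lmodType C) (T : set (A * B)).
Hypothesis TL : is_linrel T.

Lemma linrelD p q : T p -> T q -> T (p.1 + q.1, p.2 + q.2).
Proof. by case: TL => _ hl hp hq; have := hl 1 _ _ hp hq; rewrite !scale1r. Qed.

Lemma linrelB p q : T p -> T q -> T (p.1 - q.1, p.2 - q.2).
Proof.
case: TL => h0 hl hp hq.
have := hl (-1) q (0, 0) hq h0; rewrite /= !addr0 !scaleN1r; exact: linrelD.
Qed.
End LinearRelation.

Lemma domr_fst (R : realType) (A B : lmodType R[i]) (T : set (A * B)) p :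
  T p -> domr T p.1.
Proof. by case: p => f g hp; exists g. Qed.

Section Adjoint.
Variable R : realType.
Local Notation C := R[i].
Variables (A B : lmodType C) (ipA : A -> A -> C) (ipB : B -> B -> C).
Hypotheses (HA : is_hilbert ipA) (HB : is_hilbert ipB).

Lemma adjr_linrel (T : set (A * B)) : is_linrel (adjr ipA ipB T).
Proof.
split=> [q _|a p q hp hq r hr] /=; first by rewrite (ip0r HB) (ip0r HA).
by rewrite (ipDr HB) (ipZr HB) (ipDr HA) (ipZr HA) hp // hq.
Qed.

Lemma adjr_closed (T : set (B * A)) (u : nat -> A * B) p :
  (forall n, adjr ipB ipA T (u n)) ->
  ncvg ipA (fun n => (u n).1) p.1 -> ncvg ipB (fun n => (u n).2) p.2 ->
  adjr ipB ipA T p.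
Proof.
move=> hu h1 h2 q hq.
exact: (eq_cvgc_lim (fun n => hu n q hq) (cvgc_ipr HA q.2 h1) (cvgc_ipr HB q.1 h2)).
Qed.

Lemma sub_adjr_adjr (T : set (A * B)) : T `<=` adjr ipB ipA (adjr ipA ipB T).
Proof. by move=> q hq p hp /=; rewrite (ipC HA) (ipC HB) hp. Qed.

Lemma adjr_anti (T1 T2 : set (A * B)) :
  T1 `<=` T2 -> adjr ipA ipB T2 `<=` adjr ipA ipB T1.
Proof. by move=> s p hp q /s; apply: hp. Qed.
End Adjoint.

Section DoubleAdjoint.
Variable R : realType.
Local Notation C := R[i].
Variables (A B : lmodType C) (ipA : A -> A -> C) (ipB : B -> B -> C).
Hypotheses (HA : is_hilbert ipA) (HB : is_hilbert ipB).
Variable T : set (A * B).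
Local Notation Ts := (adjr ipA ipB T).
Local Notation Tss := (adjr ipB ipA Ts).

(* T^** is contained in the closure of T: project onto T in A x B; the
   residual lies in T^** and is orthogonal to T, i.e. its rotation lies in
   T^*, which forces it to vanish. *)
Lemma adjr_adjr_closure p : is_linrel T -> Tss p ->
  exists s : nat -> A * B, (forall n, T (s n)) /\
    ncvg ipA (fun n => (s n).1) p.1 /\ ncvg ipB (fun n => (s n).2) p.2.
Proof.
move=> [T0 Tl] hp.
have [s [m [sT [scv horth]]]] := orthogonal_projection (is_hilbert_prod HA HB) T0 Tl p.
have [s1 s2] := proj1 (ncvg_prod HA HB s m) scv.
have mT : Tss m.
  by apply: (adjr_closed HA HB _ s1 s2) => n; apply: sub_adjr_adjr.
set r1 := p.1 - m.1; set r2 := p.2 - m.2.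
have rT : Tss (r1, r2) := linrelB (adjr_linrel HB HA Ts) hp mT.
have rTs : Ts (- r2, r1).
  move=> q /horth; rewrite /ip_prod /= => /eqP; rewrite addr_eq0 => /eqP e.
  by rewrite (ipNr HB) (ipC HB) (ipC HA) e rmorphN.
have := rT _ rTs; rewrite /= (ipNl HB) => e.
have nr : sqnorm ipA r1 = - sqnorm ipB r2 by rewrite /sqnorm e ReN.
have := sqnorm_ge0 HA r1; have := sqnorm_ge0 HB r2 => g2 g1.
have /eqP : r1 = 0 by apply: (sqnorm_eq0 HA); lra.
have /eqP : r2 = 0 by apply: (sqnorm_eq0 HB); lra.
rewrite !subr_eq0 => /eqP e2 /eqP e1.
by exists s; rewrite e1 e2.
Qed.

Local Notation X := (compr Tss Ts).

Lemma adjr_adjr_adjr_sym p q : X p -> X q -> ipB q.2 p.1 = ipB q.1 p.2.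
Proof.
case: p => f w [g [hg hgw]]; case: q => f2 w2 [g2 [hg2 hgw2]] /=.
have /= e1 := hgw2 _ hg; have /= e2 := hgw _ hg2.
by rewrite (ipC HB f w2) -e1 -e2 (ipC HA g g2).
Qed.

(* Projecting (u, 0) onto the closed subspace T^* of B x A splits
   u = f + w with {f, w} in T^** T^*. *)
Lemma adjr_adjr_adjr_onto u : exists f w, X (f, w) /\ f + w = u.
Proof.
have [h0 hl] := adjr_linrel HA HB T.
have [s [m [sJ [scv horth]]]] := orthogonal_projection (is_hilbert_prod HB HA) h0 hl (u, 0).
have [s1 s2] := proj1 (ncvg_prod HB HA s m) scv.
have mJ : Ts m by apply: (adjr_closed HB HA _ s1 s2).
exists m.1, (u - m.1); split; last by rewrite addrC subrK.
exists m.2; split; first by case: (m) mJ.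
move=> a /horth; rewrite /ip_prod /= => /eqP; rewrite addr_eq0 => /eqP e.
by rewrite (ipC HB (u - m.1) a.1) e sub0r (ipNl HA) opprK (ipC HA m.2 a.2).
Qed.

(* Symmetric and onto after adding the identity: hence selfadjoint. *)
Lemma adjr_adjr_adjr_selfadjoint : adjr ipB ipB X `<=` X.
Proof.
move=> [h y] hhy.
have [f [w [hfw efw]]] := adjr_adjr_adjr_onto (h + y).
set d := h - f.
have hXs : adjr ipB ipB X (f, w) by move=> q hq; exact: adjr_adjr_adjr_sym hfw hq.
have hd : adjr ipB ipB X (d, - d).
  have ey : y = f + w - h by rewrite efw addrAC subrr add0r.
  have -> : - d = y - w by rewrite /d opprB ey addrAC addrK.
  by have := linrelB (adjr_linrel HB HB X) hhy hXs.
have [g [z [hgz egz]]] := adjr_adjr_adjr_onto d.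
have /= e1 := hd _ hgz.
have /eqP : d = 0.
  by apply: (ip_self_eq0 HB); rewrite -{1}egz (ipDl HB) e1 (ipNr HB) subrr.
rewrite subr_eq0 => /eqP hf.
have yw : y = w by apply: (addrI h); rewrite -efw hf.
by rewrite hf yw.
Qed.
End DoubleAdjoint.

Section Shift.
Variable R : realType.
Variables (V : lmodType R[i]) (a : R[i]).

Lemma shift_eq_diff (p q : V * V) :
  q.2 - a *: q.1 = p.2 - a *: p.1 -> p.2 - q.2 = a *: (p.1 - q.1).
Proof.
move=> e; have -> : q.2 = p.2 - a *: p.1 + a *: q.1 by rewrite -e subrK.
by rewrite opprD addrA opprB addrCA subrr addr0 scalerBr.
Qed.

Lemma hatNE (T : set (V * V)) p :
  hatN a T p <-> T (p.1, a *: p.1) /\ p.2 = a *: p.1.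
Proof.
split=> [[[q [hq [e1 e2]]] ->]|[h e]]; last first.
  by split=> //; exists (p.1, a *: p.1); rewrite /= subrr.
suff -> : (p.1, a *: p.1) = q by [].
case: q hq e1 e2 => f g /= _ -> /eqP.
by rewrite eq_sym subr_eq0 => /eqP ->.
Qed.

Lemma csum_hatN (T U : set (V * V)) p q : T q ->
  U (p.1 - q.1, a *: (p.1 - q.1)) -> p.2 - q.2 = a *: (p.1 - q.1) ->
  csum T (hatN a U) p.
Proof.
move=> hq hU e; exists q, (p.1 - q.1, a *: (p.1 - q.1)).
split=> //; split; first exact/hatNE.
by rewrite -e /= [q.1 + _]addrC [q.2 + _]addrC !subrK; case: (p).
Qed.
End Shift.

Section Companion.
Variable R : realType.
Local Notation C := R[i].
Local Notation Re := complex.Re.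
Variables (V : lmodType C) (ip : V -> V -> C) (S : set (V * V)) (c : R)
  (K : lmodType C) (ipK : K -> K -> C) (Q : V -> K).
Hypotheses (HV : is_hilbert ip) (HK : is_hilbert ipK) (SL : is_linrel S)
  (Hr : repr_map ip ipK S c Q).

Local Notation cC := (c%:C : C).
Local Notation Sadj := (adjr ip ip S).
Local Notation Sc := (shiftr S cC).
Local Notation J := (companion S c Q).
Local Notation Js := (adjr ipK ip J).
Local Notation Jss := (adjr ip ipK Js).
Local Notation Dt := (dom_formcl ip (invr Sc)).

Lemma reprQ_lin a x y : domr S x -> domr S y -> Q (a *: x + y) = a *: Q x + Q y.
Proof. by case: Hr => h _; apply: h. Qed.

Lemma reprQ_form p y : S p -> domr S y ->
  ip p.2 y = cC * ip p.1 y + ipK (Q p.1) (Q y).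
Proof. by case: Hr => _; apply. Qed.

Lemma reprQ0 : Q 0 = 0.
Proof.
have d0 : domr S 0 by exists 0; case: SL.
have := reprQ_lin 1 d0 d0; rewrite scaler0 addr0 scale1r => h.
by apply: (addrI (Q 0)); rewrite addr0 -h.
Qed.

Lemma reprQB p q : S p -> S q -> Q (p.1 - q.1) = Q p.1 - Q q.1.
Proof.
move=> hp hq.
have d0 : domr S 0 by exists 0; case: SL.
have dnq : domr S (- q.1).
  by exists (- q.2); have := linrelB SL (proj1 SL) hq; rewrite !sub0r.
have QN : Q (- q.1) = - Q q.1.
  by have := reprQ_lin (-1) (domr_fst hq) d0; rewrite addr0 reprQ0 addr0 !scaleN1r.
by have := reprQ_lin 1 (domr_fst hp) dnq; rewrite !scale1r QN.
Qed.

Lemma repr_shift p y : S p -> domr S y ->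
  ip (p.2 - cC *: p.1) y = ipK (Q p.1) (Q y).
Proof. by move=> hp hy; rewrite (ipBl HV) (ipZl HV) reprQ_form // addrC addKr. Qed.

Lemma S_sub_adj : S `<=` Sadj.
Proof.
move=> p hp q hq.
rewrite reprQ_form //; last exact: domr_fst.
rewrite (ipC HV p.1) (ipC HK (Q p.1)) (ipC HV p.2) reprQ_form //; last exact: domr_fst.
by rewrite -{1}(conjc_real c) -rmorphM -rmorphD.
Qed.

Lemma adj_shift q p : S q -> Sadj p ->
  ip (q.2 - cC *: q.1) p.1 = ip q.1 (p.2 - cC *: p.1).
Proof.
by move=> hq hp; rewrite (ipBl HV) (ipBr HV) (ipZl HV) (ipZr_real HV) hp.
Qed.

Lemma companion_mem p : S p -> J (Q p.1, p.2 - cC *: p.1).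
Proof. by exists p. Qed.

Lemma companion_adj_Q p : S p -> Js (p.1, Q p.1).
Proof. by move=> hp _ [q [hq ->]] /=; rewrite repr_shift //; apply: domr_fst. Qed.

Lemma companion_adj_ker n : Js (n, 0) <-> Sadj (n, cC *: n).
Proof.
split=> hn q hq /=.
  have := hn _ (companion_mem hq).
  by rewrite /= (ip0r HK) (ipBl HV) (ipZl HV) (ipZr_real HV) => /eqP; rewrite subr_eq0 => /eqP.
case: hq => p [hp ->] /=.
by rewrite (ip0r HK) (ipBl HV) (ipZl HV) hn //= (ipZr_real HV) subrr.
Qed.

Lemma companion_adj_adj h k v : Js (h, k) -> Jss (k, v) -> Sadj (h, v + cC *: h).
Proof.
move=> hk kv q hq /=.
have /= e1 := hk _ (companion_mem hq).
have /= e2 := kv _ (companion_adj_Q hq).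
have : ip (q.2 - cC *: q.1) h = ip q.1 v by rewrite e1 e2.
rewrite (ipBl HV) (ipZl HV) (ipDr HV) (ipZr_real HV) => <-.
by rewrite subrK.
Qed.

Lemma companion_linrel : is_linrel J.
Proof.
split.
  by exists (0, 0); split; [case: SL | rewrite /= reprQ0 scaler0 subrr].
move=> a _ _ [p [hp ->]] [q [hq ->]].
exists (a *: p.1 + q.1, a *: p.2 + q.2); split; first by case: SL => _; apply.
rewrite /= (reprQ_lin _ (domr_fst hp) (domr_fst hq)); congr (_, _).
by rewrite scalerBr scalerDr !scalerA mulrC addrACA opprD.
Qed.

(* The closed form of t((S - c)^-1) measures increments by ||Q .||^2. *)
Lemma form_shift_diff p q : S p -> S q ->
  ip (p.1 - q.1) ((p.2 - cC *: p.1) - (q.2 - cC *: q.1)) =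
  ipK (Q p.1 - Q q.1) (Q p.1 - Q q.1).
Proof.
move=> hp hq; have hd := linrelB SL hp hq.
have -> : p.2 - cC *: p.1 - (q.2 - cC *: q.1) =
    (p.2 - q.2) - cC *: (p.1 - q.1).
  by rewrite scalerBr !opprD !opprK addrACA.
by rewrite (ipC HV) (repr_shift hd (domr_fst hd)) /= (reprQB hp hq) -(ipC HK).
Qed.

Lemma dom_formclE x : Dt x <-> exists ph : nat -> V * V, (forall n, S (ph n)) /\
  ncvg ip (fun n => (ph n).2 - cC *: (ph n).1) x /\ ncauchy ipK (fun n => Q (ph n).1).
Proof.
have nK y : `|ipK y y| = (sqnorm ipK y)%:C.
  by rewrite ger0_norm ?(ip_self_ge0 HK) // (ip_self HK).
split.
- case=> u [hu [/(cvg_seqE HV) hc hcau]].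
  have hq n : {q | S q /\ ((u n).2, (u n).1) = (q.1, q.2 - cC *: q.1)}.
    by apply: cid; apply: hu.
  set ph := fun n => sval (hq n).
  have phS n : S (ph n) by rewrite /ph; case: (hq n) => q /= [].
  have phE n : (u n).2 = (ph n).1 /\ (u n).1 = (ph n).2 - cC *: (ph n).1.
    by rewrite /ph; case: (hq n) => q /= [_ [-> ->]].
  exists ph; split=> //; split; first by apply: eq_ncvg _ hc => n; case: (phE n).
  move=> e /hcau [N hN]; exists N => n m h1 h2; have := hN n m h1 h2.
  case: (phE n) => -> ->; case: (phE m) => -> ->.
  by rewrite form_shift_diff // nK ltcR.
- case=> ph [phS [hc hcau]].
  exists (fun n => ((ph n).2 - cC *: (ph n).1, (ph n).1)); split.
    by move=> n; exists (ph n).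
  split; first exact/(cvg_seqE HV).
  move=> e /hcau [N hN]; exists N => n m h1 h2 /=.
  by rewrite form_shift_diff // nK ltcR; apply: hN.
Qed.

Lemma companion_adj_adj_dom k v : Jss (k, v) -> Dt v.
Proof.
move=> /(adjr_adjr_closure HK HV companion_linrel) [s [sJ [s1 s2]]].
have hq n : {q | S q /\ s n = (Q q.1, q.2 - cC *: q.1)} by apply: cid; apply: sJ.
set ph := fun n => sval (hq n).
have phS n : S (ph n) by rewrite /ph; case: (hq n) => q /= [].
have phE n : s n = (Q (ph n).1, (ph n).2 - cC *: (ph n).1).
  by rewrite /ph; case: (hq n) => q /= [].
apply/dom_formclE; exists ph; split=> //; split.
  by apply: eq_ncvg _ s2 => n; rewrite phE.
by apply: (ncvg_cauchy HK (x := k)); apply: eq_ncvg _ s1 => n; rewrite phE.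
Qed.

Local Notation SKc := (kreinK ip ipK S c Q).
Local Notation Skc := (kreink ip ipK S c Q).

Lemma kreinkE : Skc = csum S (hatN cC Sadj).
Proof.
apply/seteqP; split.
- move=> _ [q [[g [hg [ph [hph [/= eg eq2]]]]] ->]].
  apply: (csum_hatN hph); last by apply: shift_eq_diff; rewrite /= addrK eq2.
  apply/companion_adj_ker.
  by have := linrelB (adjr_linrel HK HV J) hg (companion_adj_Q hph); rewrite /= eg subrr.
- move=> _ [q1 [q2 [h1 [/hatNE [h2 e2] ->]]]].
  exists (q1.1 + q2.1, q1.2 - cC *: q1.1); split.
    exists (Q q1.1); split; last exact: companion_mem.
    have := linrelD (adjr_linrel HK HV J) (companion_adj_Q h1) (proj2 (companion_adj_ker _) h2).
    by rewrite /= addr0.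
  by rewrite /= e2; congr (_, _); rewrite scalerDr addrA subrK.
Qed.

Lemma symmetric_sub_kreink (H : set (V * V)) : is_linrel H -> symmetricr ip H ->
  S `<=` H -> ranr (shiftr H cC) `<=` ranr Sc -> H `<=` Skc.
Proof.
move=> HL Hs SH Hran p hp; rewrite kreinkE.
have [f [ph [hph [_ ex]]]] : ranr Sc (p.2 - cC *: p.1) by apply: Hran; exists p.1, p.
have e := shift_eq_diff (esym ex).
have hn : H (p.1 - ph.1, cC *: (p.1 - ph.1)).
  by have := linrelB HL hp (SH _ hph); rewrite e.
by apply: (csum_hatN hph _ e) => q hq; apply: Hs hn q (SH _ hq).
Qed.

Lemma kreinKE : SKc = [set p | Sadj p /\ Dt (p.2 - cC *: p.1)].
Proof.
apply/seteqP; split.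
- move=> _ [q [[g [hg hgq]] ->]] /=; split; first exact: companion_adj_adj hg hgq.
  by rewrite addrK; apply: companion_adj_adj_dom hgq.
- move=> p [hp /dom_formclE [ph [phS [hcv hcau]]]].
  have [k hk] := ncauchy_cvg HK hcau.
  have h1 : Js (p.1, k).
    move=> _ [psi [hpsi ->]] /=; rewrite (adj_shift hpsi hp).
    apply: (eq_cvgc_lim _ (cvgc_ipr HV psi.1 hcv) (cvgc_ipr HK (Q psi.1) hk)) => n.
    rewrite -(adj_shift hpsi (S_sub_adj (phS n))).
    exact: companion_adj_Q (phS n) _ (companion_mem hpsi).
  have h2 : Jss (k, p.2 - cC *: p.1).
    move=> [a b] hab /=.
    apply: (eq_cvgc_lim _ (cvgc_ipr HK b hk) (cvgc_ipr HV a hcv)) => n.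
    have /= e := hab _ (companion_mem (phS n)).
    by rewrite (ipC HK (Q (ph n).1) b) -e -(ipC HV).
  exists (p.1, p.2 - cC *: p.1); split; first by exists k.
  by rewrite /= subrK; case: (p).
Qed.

Lemma kreinK_sym p q : SKc p -> SKc q -> ip q.2 p.1 = ip q.1 p.2.
Proof.
move=> [p' [hp ->]] [q' [hq ->]] /=.
by rewrite (ipDl HV) (ipDr HV) (ipZl HV) (ipZr_real HV) (adjr_adjr_adjr_sym HK HV hp hq).
Qed.

Lemma kreinK_selfadjoint : adjr ip ip SKc `<=` SKc.
Proof.
move=> p hp; exists (p.1, p.2 - cC *: p.1); split; last by rewrite /= subrK; case: (p).
apply: (adjr_adjr_adjr_selfadjoint HK HV) => q hq /=.
have hq' : SKc (q.1, q.2 + cC *: q.1) by exists q.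
have := hp _ hq'; rewrite /= (ipDl HV) (ipZl HV) (ipBr HV) (ipZr_real HV) => <-.
by rewrite addrK.
Qed.

Lemma selfadjoint_eq_kreinK (H : set (V * V)) : selfadjointr ip H -> S `<=` H ->
  ranr (shiftr H cC) `<=` Dt -> H = SKc.
Proof.
move=> Hsa SH Hran.
have HSK : H `<=` SKc.
  move=> p hp; rewrite kreinKE; split; first by apply: (adjr_anti SH); rewrite -Hsa.
  by apply: Hran; exists p.1, p.
apply/seteqP; split => // p hp; rewrite Hsa => q hq.
exact: kreinK_sym hp (HSK _ hq).
Qed.

Lemma ran_shift_sub_adj : ranr Sc `<=` ranr (shiftr Sadj cC).
Proof. by move=> x [f [q [hq [_ ->]]]]; exists q.1, q; split=> //; apply: S_sub_adj. Qed.

Lemma ran_shift_dom : ranr Sc `<=` Dt.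
Proof.
move=> x [f [ph [hph [_ ->]]]]; apply/dom_formclE; exists (fun _ => ph).
split=> //; split; first exact: ncvg_cst.
by move=> e he; exists 0%N => n m _ _; rewrite subrr /sqnorm (ip0l HK).
Qed.

Lemma dom_sub_closure : Dt `<=` closure_set ip (ranr Sc).
Proof.
move=> x /dom_formclE [ph [phS [hcv _]]].
exists (fun n => (ph n).2 - cC *: (ph n).1); split; last exact/(cvg_seqE HV).
by move=> n; exists (ph n).1, (ph n).
Qed.

Lemma ran_shift_csum_hatN p : csum S (hatN cC Sadj) p -> ranr Sc (p.2 - cC *: p.1).
Proof.
move=> [q1 [q2 [h1 [/hatNE [_ e2] ->]]]]; exists q1.1, q1; split=> //=.
by rewrite e2 scalerDr opprD addrACA subrr addr0.
Qed.

Lemma kreink_sub_kreinK : Skc `<=` SKc.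
Proof.
move=> p; rewrite kreinkE kreinKE => hp.
split; last exact: ran_shift_dom (ran_shift_csum_hatN hp).
case: hp => q1 [q2 [h1 [/hatNE [h2 e2] ->]]].
by have := linrelD (adjr_linrel HV HV S) (S_sub_adj h1) h2; rewrite -e2.
Qed.

Lemma adj_ker_orth_closure n x : Sadj (n, cC *: n) ->
  closure_set ip (ranr Sc) x -> ip n x = 0.
Proof.
move=> hn [xs [hxs /(cvg_seqE HV) hcv]].
have hxn m : {q | S q /\ xs m = q.2 - cC *: q.1}.
  by apply: cid; case: (hxs m) => g [q [hq [_ e]]]; exists q.
apply: (eq_cvgc_lim _ (cvgc_ipr HV n hcv) (cvgc_cst 0)) => m.
case: (hxn m) => q [hq ->].
by rewrite (ipC HV) (ipBl HV) (ipZl HV) (hn _ hq) /= (ipZr_real HV) subrr conjc0.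
Qed.

Lemma adj_csum_hatN p : Sadj p -> closure_set ip (ranr Sc) (p.2 - cC *: p.1) ->
  adjr ip ip (csum S (hatN cC Sadj)) p.
Proof.
move=> hp hx _ [q1 [q2 [h1 [/hatNE [h2 e2] ->]]]] /=.
rewrite !(ipDl HV) (hp _ h1) e2 (ipZl HV); congr (_ + _).
rewrite -[in RHS](subrK (cC *: p.1) p.2) (ipDr HV) (ipZr_real HV).
by rewrite (adj_ker_orth_closure h2 hx) add0r.
Qed.

Lemma kreink_eq_kreinK_iff :
  Skc = SKc <-> ranr Sc = closure_set ip (ranr Sc) `&` ranr (shiftr Sadj cC).
Proof.
split=> [eqk|eqr]; apply/seteqP; split.
- move=> x hx; split; last exact: ran_shift_sub_adj.
  exact: dom_sub_closure (ran_shift_dom hx).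
- move=> x [hx [f [p [hp [_ ex]]]]]; subst x.
  have hpK : SKc p.
    by apply: kreinK_selfadjoint; rewrite -eqk kreinkE; exact: adj_csum_hatN.
  by move: hpK; rewrite -eqk kreinkE => /ran_shift_csum_hatN.
- exact: kreink_sub_kreinK.
- move=> p; rewrite kreinKE => -[hp hx].
  have [f [ph [hph [_ ex]]]] : ranr Sc (p.2 - cC *: p.1).
    by rewrite eqr; split; [exact: dom_sub_closure | exists p.1, p].
  have e := shift_eq_diff (esym ex).
  rewrite kreinkE; apply: (csum_hatN hph _ e).
  by have := linrelB (adjr_linrel HV HV S) hp (S_sub_adj hph); rewrite e.
Qed.

Lemma kreink_eq_kreinK_of_closed :
  closure_set ip (ranr Sc) = ranr Sc -> Skc = SKc.
Proof.
move=> h; apply/kreink_eq_kreinK_iff; rewrite h; apply/seteqP.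
by split=> [x hx|x []//]; split=> //; apply: ran_shift_sub_adj.
Qed.

Lemma lb_sqnormQ c2 p : lb_set ip S c2 -> S p ->
  (c2 - c) * sqnorm ip p.1 <= sqnorm ipK (Q p.1).
Proof.
move=> hl hp.
have := hl p hp; rewrite lecE => /andP[_]; rewrite Re_realM -/(sqnorm ip p.1) => hre.
have -> : sqnorm ipK (Q p.1) = Re (ip p.2 p.1) - c * sqnorm ip p.1.
  by rewrite /sqnorm -(repr_shift hp (domr_fst hp)) (ipBl HV) (ipZl HV) ReB Re_realM.
by rewrite mulrBl; lra.
Qed.

(* ||Q (f_n - f_m)||^2 = (f_n' - f_m' - c (f_n - f_m), f_n - f_m) is controlled
   by Cauchy-Schwarz. *)
Lemma reprQ_cauchy (u : nat -> V * V) : (forall n, S (u n)) ->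
  ncauchy ip (fun n => (u n).1) -> ncauchy ip (fun n => (u n).2 - cC *: (u n).1) ->
  ncauchy ipK (fun n => Q (u n).1).
Proof.
move=> hu y1 y2 e he.
have [N1 hN1] := y1 _ (mulr_gt0 he he); have [N2 hN2] := y2 _ ltr01.
exists (maxn N1 N2) => n m h1 h2.
have := hN1 n m (leq_trans (leq_maxl _ _) h1) (leq_trans (leq_maxl _ _) h2).
have := hN2 n m (leq_trans (leq_maxr _ _) h1) (leq_trans (leq_maxr _ _) h2).
have := Re_ip_sqr_le HV ((u n).2 - cC *: (u n).1 - ((u m).2 - cC *: (u m).1))
  ((u n).1 - (u m).1).
rewrite (ipC HV ((u n).1 - (u m).1)) (form_shift_diff (hu n) (hu m)) ReJ.
rewrite -/(sqnorm ipK _).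
have := sqnorm_ge0 HK (Q (u n).1 - Q (u m).1).
have := sqnorm_ge0 HV ((u n).1 - (u m).1).
have := sqnorm_ge0 HV ((u n).2 - cC *: (u n).1 - ((u m).2 - cC *: (u m).1)).
set A := sqnorm ipK _; set B := sqnorm ip ((u n).1 - _); set D := sqnorm ip (_ - _ - _).
clearbody A B D => gD gB gA cs a2 a1; nra.
Qed.

Lemma kreinK_sub_csum_closure c2 : lb_set ip S c2 -> c < c2 ->
  SKc `<=` csum (closure_rel ip S) (hatN cC Sadj).
Proof.
move=> hc2 cc2 p; rewrite kreinKE => -[hp /dom_formclE [ph [phS [hcv hcau]]]].
have dp : 0 < c2 - c by rewrite subr_gt0.
have cau1 : ncauchy ip (fun n => (ph n).1).
  move=> e he; have [N hN] := hcau (e * (c2 - c)) (mulr_gt0 he dp).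
  exists N => n m h1 h2.
  have := lb_sqnormQ hc2 (linrelB SL (phS n) (phS m)).
  rewrite /= (reprQB (phS n) (phS m)); have := hN n m h1 h2.
  have := sqnorm_ge0 HV ((ph n).1 - (ph m).1).
  set a := sqnorm ip _; set b := sqnorm ipK _; clearbody a b => ga hb hab; nra.
have [phi hphi] := ncauchy_cvg HV cau1.
set x := p.2 - cC *: p.1 in hcv.
have h2 : ncvg ip (fun n => (ph n).2) (x + cC *: phi).
  by apply: eq_ncvg _ (ncvgD HV hcv (ncvgZ HV cC hphi)) => n; rewrite subrK.
have hcl : closure_rel ip S (phi, x + cC *: phi).
  by exists ph; split=> //; split; apply/(cvg_seqE HV).
have hsa : Sadj (phi, x + cC *: phi).
  by apply: (adjr_closed (p := (phi, _)) HV HV _ hphi h2) => n; apply: S_sub_adj.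
have e := shift_eq_diff (p := p) (q := (phi, x + cC *: phi)) (addrK _ _).
apply: (csum_hatN hcl _ e).
by have := linrelB (adjr_linrel HV HV S) hp hsa; rewrite e.
Qed.

Lemma csum_closure_sub_kreinK : csum (closure_rel ip S) (hatN cC Sadj) `<=` SKc.
Proof.
move=> _ [q1 [q2 [[u [hu [/(cvg_seqE HV) u1 /(cvg_seqE HV) u2]]] [/hatNE [h2 e2] ->]]]].
rewrite kreinKE; split.
  have hq1 : Sadj q1 by apply: (adjr_closed HV HV _ u1 u2) => n; apply: S_sub_adj.
  by have := linrelD (adjr_linrel HV HV S) hq1 h2; rewrite -e2.
rewrite /= e2 scalerDr opprD addrACA subrr addr0.
have u3 := ncvgB HV u2 (ncvgZ HV cC u1).
apply/dom_formclE; exists u; split=> //; split=> //.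
exact: reprQ_cauchy hu (ncvg_cauchy HV u1) (ncvg_cauchy HV u3).
Qed.
End Companion.

Lemma lb_set_gt (R : realType) (V : lmodType R[i]) (ip : V -> V -> R[i])
    (S : set (V * V)) (gamma c : R) :
  semibounded_lb ip S gamma -> c < gamma -> exists2 c2, lb_set ip S c2 & c < c2.
Proof.
move=> [_ [_ hsup]] hlt; apply: contrapT => hn.
have : gamma <= c.
  by apply: hsup => c2 hc2; rewrite leNgt; apply/negP => cc2; apply: hn; exists c2.
by rewrite leNgt hlt.
Qed.

Unset Implicit Arguments.

Theorem theorem6p1 (R : realType) (V : lmodType R[i]) (ip : V -> V -> R[i])
  (S : set (V * V)) (gamma c : R)
  (K : lmodType R[i]) (ipK : K -> K -> R[i]) (Q : V -> K) :
  is_hilbert ip -> is_hilbert ipK ->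
  semibounded_lb ip S gamma -> c <= gamma ->
  repr_map ip ipK S c Q ->
  let SKc := kreinK ip ipK S c Q in
  let Skc := kreink ip ipK S c Q in
  let Sc := shiftr S (c%:C)%C in
  (SKc = [set p | adjr ip ip S p /\
                  dom_formcl ip (invr Sc) (p.2 - (c%:C)%C *: p.1)] /\
   forall H : set (V * V), is_linrel H -> selfadjointr ip H -> S `<=` H ->
     ranr (shiftr H (c%:C)%C) `<=` dom_formcl ip (invr Sc) -> H = SKc) /\
  (Skc = csum S (hatN (c%:C)%C (adjr ip ip S)) /\
   forall H : set (V * V), is_linrel H -> symmetricr ip H -> S `<=` H ->
     ranr (shiftr H (c%:C)%C) `<=` ranr Sc -> H `<=` Skc) /\
  (c < gamma -> SKc = csum (closure_rel ip S) (hatN (c%:C)%C (adjr ip ip S))) /\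
  (c = gamma ->
     (Skc = SKc <->
      ranr Sc = closure_set ip (ranr Sc) `&` ranr (shiftr (adjr ip ip S) (c%:C)%C))) /\
  (c = gamma -> closure_set ip (ranr Sc) = ranr Sc -> Skc = SKc).
Proof.
(* c <= gamma already follows from repr_map; the last two parts need no c = gamma. *)
move=> HV HK Hsb _ Hr SKc Skc Sc.
have SL : is_linrel S by case: Hsb.
split; first split.
- by apply: kreinKE.
- by move=> H _ Hsa SH; apply: selfadjoint_eq_kreinK.
split; first split.
- by apply: kreinkE.
- by move=> H HL Hs SH; apply: symmetric_sub_kreink.
split.
  by move=> /(lb_set_gt Hsb) [c2 hc2 cc2]; apply/seteqP; split;
    [apply: kreinK_sub_csum_closure hc2 cc2 | apply: csum_closure_sub_kreinK].
split; first by move=> _; apply: kreink_eq_kreinK_iff.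
by move=> _; apply: kreink_eq_kreinK_of_closed.
Qed.
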